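(* Let $I$ be an index set and $p_r,q_r\in\mathbb R\setminus\{0\}$ for $r\in I$. There exists a homeomorphism $f\colon\mathbb R\to\mathbb R$ with $f(p_rx)=q_rf(x)$ for all $x\in\mathbb R$, $r\in I$, if and only if there exists a real number $\alpha>-1$ such that $q_r=p_r|p_r|^{\alpha}$ for all $r\in I$. *)

From Stdlib Require Import Reals.
Open Scope R_scope.

Definition homeomorphism (f : R -> R) : Prop :=
  continuity f /\
  exists g : R -> R, continuity g /\
    (forall x, g (f x) = x) /\ (forall y, f (g y) = y).

(* A homeomorphism of R is strictly monotone, and -f solves the same
   equations as f, so f may be taken increasing.  If f 0 <> 0 the equation
   at x = 0 forces q = 1 and then p = 1.  Otherwise, on the half-line x > 0,
   f (p^2 x) = q^2 f x; writing p^2 = exp u and q^2 = exp v, monotonicity of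
   the orbits f (exp (m u)) = exp (m v) f 1 over natural m pins v / u down to
   a single positive constant c, so |q| = |p|^c, and p, q have the same sign
   because f preserves signs.  Conversely, the signed power
   x |-> sgn x |x|^(alpha+1) is a multiplicative homeomorphism. *)

From Stdlib Require Import Reals Lra Lia Psatz ZArith Classical.
Open Scope R_scope.

Lemma continuous_injective_increment_sign (f : R -> R) (a b c d : R) :
  continuity f -> (forall x y, f x = f y -> x = y) ->
  a < b -> c < d -> 0 < (f b - f a) * (f d - f c).
Proof.
  intros fc finj hab hcd.
  (* Slide the pair (a, b) linearly to (c, d); the increment never vanishes. *)
  set (h t := f (b + t * (d - b)) - f (a + t * (c - a))).
  assert (hc : continuity h).
  { unfold h. apply continuity_minus.
    - apply (continuity_comp (fun t => b + t * (d - b)) f); [reg | exact fc].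
    - apply (continuity_comp (fun t => a + t * (c - a)) f); [reg | exact fc]. }
  destruct (Rlt_or_le 0 ((f b - f a) * (f d - f c))) as [|hle]; [assumption | exfalso].
  assert (h01 : h 0 * h 1 <= 0).
  { unfold h. now replace (b + 0 * (d - b)) with b by ring;
      replace (a + 0 * (c - a)) with a by ring;
      replace (b + 1 * (d - b)) with d by ring;
      replace (a + 1 * (c - a)) with c by ring. }
  destruct (IVT_cor h 0 1 hc ltac:(lra) h01) as [t [ht ht0]].
  unfold h in ht0.
  assert (E : b + t * (d - b) = a + t * (c - a)) by (apply finj; lra).
  assert (0 <= t * (d - c)) by (apply Rmult_le_pos; lra).
  assert (0 <= (1 - t) * (b - a)) by (apply Rmult_le_pos; lra).
  destruct (Req_dec t 0) as [-> | ht0']; [lra |].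
  assert (0 < t * (d - c)) by (apply Rmult_lt_0_compat; lra).
  lra.
Qed.

Lemma continuous_injective_monotone (f : R -> R) :
  continuity f -> (forall x y, f x = f y -> x = y) ->
  (forall x y, x < y -> f x < f y) \/ (forall x y, x < y -> f y < f x).
Proof.
  intros fc finj.
  destruct (Rlt_or_le (f 0) (f 1)) as [h01 | h10]; [left | right];
    intros x y hxy;
    pose proof (continuous_injective_increment_sign f 0 1 x y fc finj ltac:(lra) hxy);
    [nra |].
  assert (f 0 <> f 1) by (intro e; apply finj in e; lra).
  nra.
Qed.

Lemma nat_floor (t : R) : 0 <= t -> exists m : nat, INR m <= t < INR m + 1.
Proof.
  intros Ht. destruct (base_Int_part t) as [H1 H2].
  assert (Hz : (0 <= Int_part t)%Z).
  { assert (-1 < Int_part t)%Z by (apply lt_IZR; simpl; lra). lia. }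
  exists (Z.to_nat (Int_part t)).
  rewrite INR_IZR_INZ, Z2Nat.id by exact Hz. lra.
Qed.

(* The ratios of (u1, v1) and (u2, v2) are compared through the rational
   approximations m / n of u2 / u1. *)
Lemma ratio_le_of_nat_multiples (u1 u2 v1 v2 : R) : 0 < u1 -> 0 < u2 -> 0 < v1 ->
  (forall m n : nat, INR m * u1 <= INR n * u2 -> INR m * v1 <= INR n * v2) ->
  u2 * v1 <= v2 * u1.
Proof.
  intros h1 h2 h3 H.
  destruct (Rle_dec (u2 * v1) (v2 * u1)) as [|Hn]; [assumption | exfalso].
  set (d := u2 * v1 - v2 * u1).
  assert (Hd : 0 < d) by (unfold d; lra).
  destruct (INR_unbounded (u1 * v1 / d)) as [n Hn1].
  assert (Ht : 0 <= INR n * u2 / u1).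
  { apply Rmult_le_pos; [apply Rmult_le_pos; [apply pos_INR | lra] |].
    left; apply Rinv_0_lt_compat; lra. }
  destruct (nat_floor _ Ht) as [m [Hm1 Hm2]].
  assert (E1 : INR m * u1 <= INR n * u2).
  { apply Rmult_le_compat_r with (r := u1) in Hm1; [| lra].
    replace (INR n * u2 / u1 * u1) with (INR n * u2) in Hm1 by (field; lra). lra. }
  assert (E2 : INR n * u2 < INR m * u1 + u1).
  { apply Rmult_lt_compat_r with (r := u1) in Hm2; [| lra].
    replace (INR n * u2 / u1 * u1) with (INR n * u2) in Hm2 by (field; lra). lra. }
  specialize (H m n E1).
  assert (E3 : INR n * d > u1 * v1).
  { apply Rmult_lt_compat_r with (r := d) in Hn1; [| lra].
    replace (u1 * v1 / d * d) with (u1 * v1) in Hn1 by (field; lra). lra. }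
  unfold d in E3.
  assert (INR n * u2 * v1 < (INR m * u1 + u1) * v1) by (apply Rmult_lt_compat_r; lra).
  assert (INR m * v1 * u1 <= INR n * v2 * u1) by (apply Rmult_le_compat_r; lra).
  nra.
Qed.

Definition scales (F : R -> R) (u v : R) : Prop :=
  forall x, 0 < x -> F (exp u * x) = exp v * F x.

Lemma scales_opp (F : R -> R) (u v : R) : scales F u v -> scales F (- u) (- v).
Proof.
  intros H x hx.
  assert (E := H (exp (- u) * x) ltac:(apply Rmult_lt_0_compat; [apply exp_pos | lra])).
  rewrite <- Rmult_assoc, <- exp_plus, Rplus_opp_r, exp_0, Rmult_1_l in E.
  rewrite E, <- Rmult_assoc, <- exp_plus, Rplus_opp_l, exp_0. ring.
Qed.

Lemma scales_iter (F : R -> R) (u v : R) :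
  scales F u v -> forall m : nat, F (exp (INR m * u)) = exp (INR m * v) * F 1.
Proof.
  intros H m. induction m as [|m IH].
  - simpl. rewrite !Rmult_0_l, exp_0. ring.
  - rewrite S_INR, !Rmult_plus_distr_r, !Rmult_1_l, !exp_plus, Rmult_comm.
    rewrite H by apply exp_pos. rewrite IH. ring.
Qed.

Section IncreasingScaling.

Variable F : R -> R.
Hypothesis F_incr : forall x y, 0 < x -> x < y -> F x < F y.
Hypothesis F1_pos : 0 < F 1.

Lemma scales_zero (v : R) : scales F 0 v -> v = 0.
Proof.
  intros H. pose proof (H 1 Rlt_0_1) as E.
  rewrite exp_0, Rmult_1_l in E.
  assert (Hv : exp v = 1) by (apply (Rmult_eq_reg_r (F 1)); lra).
  rewrite <- exp_0 in Hv. now apply exp_inv.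
Qed.

Lemma scales_pos (u v : R) : 0 < u -> scales F u v -> 0 < v.
Proof.
  intros hu H. pose proof (H 1 Rlt_0_1) as E. rewrite Rmult_1_r in E.
  assert (F 1 < F (exp u)).
  { apply F_incr; [lra |]. rewrite <- exp_0. apply exp_increasing. lra. }
  assert (Hv : 1 < exp v) by nra.
  rewrite <- exp_0 in Hv. apply exp_lt_inv in Hv. lra.
Qed.

Lemma scales_sign (u v : R) : u <> 0 -> scales F u v -> 0 < u * v.
Proof.
  intros hu H. destruct (Rdichotomy _ _ hu).
  - pose proof (scales_pos (- u) (- v) ltac:(lra) (scales_opp F u v H)). nra.
  - pose proof (scales_pos u v H0 H). nra.
Qed.

Lemma scales_nat_mult_le (a b c d : R) (m n : nat) :
  scales F a b -> scales F c d -> INR m * a <= INR n * c -> INR m * b <= INR n * d.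
Proof.
  intros Ha Hc Hmn.
  assert (Hexp : exp (INR m * a) <= exp (INR n * c)).
  { destruct Hmn as [l | e]; [left; now apply exp_increasing | rewrite e; lra]. }
  assert (HF : F (exp (INR m * a)) <= F (exp (INR n * c))).
  { destruct Hexp as [l | e]; [left; apply F_incr; auto; apply exp_pos | rewrite e; lra]. }
  rewrite (scales_iter F a b Ha), (scales_iter F c d Hc) in HF.
  destruct (Rle_dec (INR m * b) (INR n * d)) as [| Hn]; [assumption | exfalso].
  assert (exp (INR n * d) < exp (INR m * b)) by (apply exp_increasing; lra).
  nra.
Qed.

Lemma scales_ratio_pos (u1 v1 u2 v2 : R) :
  0 < u1 -> 0 < u2 -> scales F u1 v1 -> scales F u2 v2 -> v1 * u2 = v2 * u1.
Proof.
  intros h1 h2 H1 H2.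
  pose proof (ratio_le_of_nat_multiples u1 u2 v1 v2 h1 h2 (scales_pos u1 v1 h1 H1)
                (fun m n => scales_nat_mult_le u1 v1 u2 v2 m n H1 H2)).
  pose proof (ratio_le_of_nat_multiples u2 u1 v2 v1 h2 h1 (scales_pos u2 v2 h2 H2)
                (fun m n => scales_nat_mult_le u2 v2 u1 v1 m n H2 H1)).
  lra.
Qed.

Lemma scales_ratio (u1 v1 u2 v2 : R) :
  u2 <> 0 -> scales F u1 v1 -> scales F u2 v2 -> v1 * u2 = v2 * u1.
Proof.
  intros h2 H1 H2.
  destruct (Req_dec u1 0) as [e | h1].
  { subst u1. rewrite (scales_zero v1 H1). ring. }
  pose proof (scales_opp F u1 v1 H1) as H1'. pose proof (scales_opp F u2 v2 H2) as H2'.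
  destruct (Rdichotomy _ _ h1); destruct (Rdichotomy _ _ h2).
  - pose proof (scales_ratio_pos (- u1) (- v1) (- u2) (- v2) ltac:(lra) ltac:(lra) H1' H2'); lra.
  - pose proof (scales_ratio_pos (- u1) (- v1) u2 v2 ltac:(lra) ltac:(lra) H1' H2); lra.
  - pose proof (scales_ratio_pos u1 v1 (- u2) (- v2) ltac:(lra) ltac:(lra) H1 H2'); lra.
  - now apply scales_ratio_pos.
Qed.

Lemma scales_common_exponent (I : Type) (u v : I -> R) :
  (forall r, scales F (u r) (v r)) -> exists c, 0 < c /\ forall r, v r = c * u r.
Proof.
  intros H.
  destruct (classic (exists r0, u r0 <> 0)) as [[r0 h0] | Hno].
  - exists (v r0 / u r0). split.
    + pose proof (scales_sign _ _ h0 (H r0)).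
      assert (0 < u r0 * u r0) by (destruct (Rdichotomy _ _ h0); nra).
      replace (v r0 / u r0) with (u r0 * v r0 / (u r0 * u r0)) by (field; auto).
      apply Rdiv_lt_0_compat; assumption.
    + intros r. pose proof (scales_ratio (u r) (v r) (u r0) (v r0) h0 (H r) (H r0)).
      apply (Rmult_eq_reg_r (u r0)); [| assumption]. field_simplify; [lra | assumption].
  - exists 1. split; [lra |]. intros r.
    assert (u r = 0) by (apply NNPP; intro; apply Hno; eauto).
    rewrite H0, (scales_zero (v r)); [ring |]. rewrite <- H0. apply H.
Qed.

End IncreasingScaling.

Lemma abs_sq_exponent (p q c : R) : p <> 0 -> 0 < p * q ->
  ln (q * q) = c * ln (p * p) -> q = p * Rpower (Rabs p) (c - 1).
Proof.
  intros hp hpq E.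
  assert (hq : q <> 0) by (intro; subst; lra).
  assert (ap := Rabs_pos_lt p hp). assert (aq := Rabs_pos_lt q hq).
  assert (Hln : ln (Rabs q) = c * ln (Rabs p)).
  { assert (sq : forall z, z * z = Rabs z * Rabs z).
    { intros z. rewrite <- Rabs_mult. symmetry. apply Rabs_right.
      apply Rle_ge, Rle_0_sqr. }
    rewrite (sq q), (sq p), !ln_mult in E by lra. lra. }
  unfold Rpower.
  replace ((c - 1) * ln (Rabs p)) with (ln (Rabs q) + - ln (Rabs p)) by lra.
  rewrite exp_plus, exp_Ropp, !exp_ln by assumption.
  destruct (Rdichotomy _ _ hp).
  - rewrite (Rabs_left q), (Rabs_left p) by nra. field. assumption.
  - rewrite (Rabs_right q), (Rabs_right p) by nra. field. assumption.
Qed.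

Section IncreasingSolution.

Variables (I : Type) (p q : I -> R) (f : R -> R).
Hypothesis hp : forall r, p r <> 0.
Hypothesis hq : forall r, q r <> 0.
Hypothesis f_incr : forall x y, x < y -> f x < f y.
Hypothesis f_eq : forall x r, f (p r * x) = q r * f x.

Lemma f_injective x y : f x = f y -> x = y.
Proof.
  intros e. destruct (Rtotal_order x y) as [l | [l | l]]; auto;
    apply f_incr in l; lra.
Qed.

Lemma trivial_scalings : f 0 <> 0 -> forall r, p r = 1 /\ q r = 1.
Proof.
  intros h0 r.
  assert (q1 : q r = 1).
  { pose proof (f_eq 0 r) as E. rewrite Rmult_0_r in E.
    apply (Rmult_eq_reg_r (f 0)); lra. }
  split; [| assumption].
  pose proof (f_eq 1 r) as E. rewrite q1, Rmult_1_l, Rmult_1_r in E.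
  now apply f_injective.
Qed.

Hypothesis f0 : f 0 = 0.

Lemma scales_square r : scales f (ln (p r * p r)) (ln (q r * q r)).
Proof.
  intros x hx.
  assert (0 < p r * p r) by (destruct (Rdichotomy _ _ (hp r)); nra).
  assert (0 < q r * q r) by (destruct (Rdichotomy _ _ (hq r)); nra).
  rewrite !exp_ln by assumption.
  rewrite Rmult_assoc, !f_eq. ring.
Qed.

Lemma scaling_sign r : 0 < p r * q r.
Proof.
  pose proof (f_eq 1 r) as E. rewrite Rmult_1_r in E.
  assert (0 < f 1) by (rewrite <- f0; apply f_incr; lra).
  destruct (Rdichotomy _ _ (hp r)) as [h | h]; pose proof (f_incr _ _ h) as hf;
    rewrite f0, E in hf.
  - assert (q r < 0) by nra. nra.
  - assert (0 < q r) by nra. nra.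
Qed.

Lemma increasing_solution_exponent :
  exists alpha : R, alpha > -1 /\ forall r, q r = p r * Rpower (Rabs (p r)) alpha.
Proof.
  assert (f1 : 0 < f 1) by (rewrite <- f0; apply f_incr; lra).
  destruct (scales_common_exponent f (fun x y hx hxy => f_incr x y hxy) f1 I
              (fun r => ln (p r * p r)) (fun r => ln (q r * q r)) scales_square)
    as [c [hc Hc]].
  exists (c - 1). split; [lra |].
  intros r. apply abs_sq_exponent; auto using scaling_sign.
Qed.

End IncreasingSolution.

Lemma monotone_solution_exponent (I : Type) (p q : I -> R) (f : R -> R) :
  (forall r, p r <> 0) -> (forall r, q r <> 0) -> (forall x y, x < y -> f x < f y) ->
  (forall x r, f (p r * x) = q r * f x) ->
  exists alpha : R, alpha > -1 /\ forall r, q r = p r * Rpower (Rabs (p r)) alpha.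
Proof.
  intros hp hq f_incr f_eq.
  destruct (Req_dec (f 0) 0) as [f0 | f0].
  - exact (increasing_solution_exponent I p q f hp hq f_incr f_eq f0).
  - exists 0. split; [lra |]. intros r.
    destruct (trivial_scalings I p q f f_incr f_eq f0 r) as [-> ->].
    rewrite Rabs_R1, Rpower_O by lra. ring.
Qed.

Definition spow (b x : R) : R :=
  if Rlt_dec 0 x then Rpower x b else if Rlt_dec x 0 then - Rpower (- x) b else 0.

Lemma spow_pos b x : 0 < x -> spow b x = Rpower x b.
Proof. intro h; unfold spow; destruct (Rlt_dec 0 x); [reflexivity | lra]. Qed.

Lemma spow_neg b x : x < 0 -> spow b x = - Rpower (- x) b.
Proof.
  intro h; unfold spow; destruct (Rlt_dec 0 x); [lra |].
  destruct (Rlt_dec x 0); [reflexivity | lra].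
Qed.

Lemma spow_0 b : spow b 0 = 0.
Proof. unfold spow; destruct (Rlt_dec 0 0); [lra |]; destruct (Rlt_dec 0 0); [lra | reflexivity]. Qed.

(* No hypothesis on x: Rpower x b is exp (b * ln x) even when ln x is junk. *)
Lemma Rpower_pos x b : 0 < Rpower x b.
Proof. apply exp_pos. Qed.

Lemma spow_mult b x y : spow b (x * y) = spow b x * spow b y.
Proof.
  destruct (Rtotal_order x 0) as [hx | [hx | hx]];
    destruct (Rtotal_order y 0) as [hy | [hy | hy]];
    try (subst; rewrite ?Rmult_0_l, ?Rmult_0_r, spow_0; ring).
  - rewrite spow_pos by nra. rewrite !spow_neg by lra.
    replace (x * y) with ((- x) * (- y)) by ring. rewrite <- Rpower_mult_distr by lra. ring.
  - rewrite spow_neg by nra. rewrite spow_neg, spow_pos by lra.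
    replace (- (x * y)) with ((- x) * y) by ring. rewrite <- Rpower_mult_distr by lra. ring.
  - rewrite spow_neg by nra. rewrite spow_pos, spow_neg by lra.
    replace (- (x * y)) with (x * (- y)) by ring. rewrite <- Rpower_mult_distr by lra. ring.
  - rewrite !spow_pos by nra. rewrite <- Rpower_mult_distr by lra. reflexivity.
Qed.

Lemma spow_abs_exponent a x : x <> 0 -> spow (a + 1) x = x * Rpower (Rabs x) a.
Proof.
  intros hx. destruct (Rdichotomy _ _ hx) as [h | h].
  - rewrite spow_neg, Rabs_left, Rpower_plus, Rpower_1 by lra. ring.
  - rewrite spow_pos, Rabs_right, Rpower_plus, Rpower_1 by lra. ring.
Qed.

Lemma spow_spow b c x : b * c = 1 -> spow c (spow b x) = x.
Proof.
  intro hbc. destruct (Rtotal_order x 0) as [hx | [hx | hx]].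
  - rewrite (spow_neg b) by lra. rewrite spow_neg by (pose proof (Rpower_pos (- x) b); lra).
    rewrite Ropp_involutive, Rpower_mult, hbc, Rpower_1 by lra. ring.
  - subst. rewrite !spow_0. reflexivity.
  - rewrite (spow_pos b) by lra. rewrite spow_pos by apply Rpower_pos.
    rewrite Rpower_mult, hbc, Rpower_1 by lra. reflexivity.
Qed.

Lemma continuity_pt_Rpower b x : 0 < x -> continuity_pt (fun y => Rpower y b) x.
Proof.
  intro hx. apply derivable_continuous_pt.
  exists (b * Rpower x (b - 1)). now apply derivable_pt_lim_power.
Qed.

(* At 0 we use |spow b y| = |y|^b < eps as soon as |y| < eps^(1/b). *)
Lemma spow_continuous_0 b : 0 < b -> continuity_pt (spow b) 0.
Proof.
  intros hb eps heps. exists (Rpower eps (/ b)). split; [apply Rpower_pos |].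
  intros y [[_ hy0] hy]. simpl in *. unfold Rdist in *.
  rewrite Rminus_0_r in hy. rewrite spow_0, Rminus_0_r.
  assert (E : Rpower (Rpower eps (/ b)) b = eps).
  { rewrite Rpower_mult, Rinv_l, Rpower_1 by lra. reflexivity. }
  rewrite <- E. destruct (Rdichotomy _ _ (not_eq_sym hy0)) as [hy1 | hy1].
  - rewrite spow_neg, Rabs_Ropp, Rabs_right by (try apply Rle_ge, Rlt_le, Rpower_pos; lra).
    apply Rlt_Rpower_l; [assumption |]. rewrite Rabs_left in hy; lra.
  - rewrite spow_pos, Rabs_right by (try apply Rle_ge, Rlt_le, Rpower_pos; lra).
    apply Rlt_Rpower_l; [assumption |]. rewrite Rabs_right in hy; lra.
Qed.

Lemma spow_continuous b : 0 < b -> continuity (spow b).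
Proof.
  intros hb x. destruct (Rtotal_order x 0) as [hx | [-> | hx]].
  - apply (continuity_pt_locally_ext (fun y => - Rpower (- y) b) _ (- x)); [lra | |].
    + intros y hy. unfold Rdist in hy. apply Rabs_def2 in hy. symmetry. apply spow_neg. lra.
    + apply (continuity_pt_opp (fun y => Rpower (- y) b)).
      apply (continuity_pt_comp (fun y => - y) (fun z => Rpower z b)); [reg |].
      apply continuity_pt_Rpower. lra.
  - now apply spow_continuous_0.
  - apply (continuity_pt_locally_ext (fun y => Rpower y b) _ x); [lra | |].
    + intros y hy. unfold Rdist in hy. apply Rabs_def2 in hy. symmetry. apply spow_pos. lra.
    + apply continuity_pt_Rpower. lra.
Qed.

Lemma spow_homeomorphism b : 0 < b -> homeomorphism (spow b).
Proof.
  intros hb. split; [now apply spow_continuous |].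
  assert (hb' : 0 < / b) by now apply Rinv_0_lt_compat.
  exists (spow (/ b)). split; [now apply spow_continuous |].
  split; intro; apply spow_spow; field; lra.
Qed.

Theorem theorem9p1 (I : Type) (p q : I -> R)
  (hp : forall r, p r <> 0) (hq : forall r, q r <> 0) :
  (exists f : R -> R, homeomorphism f /\
     forall (x : R) (r : I), f (p r * x) = q r * f x)
  <->
  (exists alpha : R, alpha > -1 /\
     forall r : I, q r = p r * Rpower (Rabs (p r)) alpha).
Proof.
  split.
  - intros [f [[fc [g [_ [gf _]]]] f_eq]].
    assert (finj : forall x y, f x = f y -> x = y).
    { intros x y e. now rewrite <- (gf x), <- (gf y), e. }
    destruct (continuous_injective_monotone f fc finj) as [f_incr | f_decr].
    + exact (monotone_solution_exponent I p q f hp hq f_incr f_eq).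
    + apply (monotone_solution_exponent I p q (fun x => - f x) hp hq).
      * intros x y hxy. apply Ropp_lt_contravar, f_decr, hxy.
      * intros x r. rewrite f_eq. ring.
  - intros [alpha [halpha Hq]]. exists (spow (alpha + 1)). split.
    + apply spow_homeomorphism. lra.
    + intros x r. rewrite spow_mult, spow_abs_exponent, <- Hq by apply hp. ring.
Qed.
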